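(* Let $\mathcal{B}\subseteq\mathcal{P}(X)$ be an admissible algebra containing $\mathcal{A}_0$. Let $\{\nu_k\}_{k\in\omega}$ be a sequence of (finitely additive) probability measures on $\mathcal{P}(X)$ such that (i) each $\nu_k$ is supported by a finite subset of $X$, and (ii) $\lim_k\nu_k(B)=\mu(B)$ for every $B\in\mathcal{B}$. Let $B_0\in\mathcal{B}$ be such that $\mu(B_0)>0$. Then there is $A\subseteq B_0$ such that the algebra generated by $\mathcal{B}\cup\{A\}$ is admissible and $\{\nu_k(A)\}_{k\in\omega}$ does not converge to $\mu(A)$.
   Context: $\omega=\{0,1,2,\dots\}$, $2^\omega$ is the Cantor set, $\lambda$ is the usual product probability measure on $2^\omega$, and $\mathrm{Clop}(2^\omega)$ is the algebra of clopen subsets of $2^\omega$. Let $X=\omega\times 2^\omega$. For $B\subseteq X$ and $n\in\omega$, $B_{|n}=\{t\in 2^\omega:(n,t)\in B\}$. A set $B\subseteq X$ is admissible if $B_{|n}\in\mathrm{Clop}(2^\omega)$ for all $n\in\omega$ and $\lim_n\lambda(B_{|n})$ exists; in that case $\mu(B):=\lim_n\lambda(B_{|n})$. An algebra of subsets of $X$ is admissible if all its elements are admissible. $\mathcal{A}_0$ is the algebra of subsets of $X$ generated by all products $A\times C$ with $A\subseteq\omega$ finite or cofinite and $C\in\mathrm{Clop}(2^\omega)$. *)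

From HB Require Import structures.
From mathcomp Require Import all_boot all_order all_algebra.
From mathcomp Require Import all_classical all_reals all_analysis.
Set Implicit Arguments. Unset Strict Implicit. Unset Printing Implicit Defensive.
Import Order.TTheory GRing.Theory Num.Theory.
Import numFieldTopology.Exports numFieldNormedType.Exports.
Local Open Scope classical_set_scope.
Local Open Scope ring_scope.

Definition X : Type := (nat * cantor_space)%type.

Definition clop (C : set cantor_space) : Prop := open C /\ closed C.

Definition depends_on (n : nat) (C : set cantor_space) : Prop :=
  forall t s : cantor_space, (forall i, (i < n)%N -> t i = s i) -> (C t <-> C s).

Definition ext_seq (n : nat) (f : {ffun 'I_n -> bool}) : cantor_space :=
  fun i => match insub i with Some j => f j | None => false end.

(* lambda(C) computed from any n such that C depends on the first n
   coordinates (every clopen set has one): the proportion of the 2^n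
   cylinders [f] contained in C; this is the product measure of C. *)
Definition lam_at (R : realType) (n : nat) (C : set cantor_space) : R :=
  (\sum_(f : {ffun 'I_n -> bool}) (if `[< C (ext_seq f) >] then 1 else 0))
    / (2 ^+ n).

Definition lam (R : realType) (C : set cantor_space) : R :=
  lam_at R (xget 0%N [set n | depends_on n C]) C.

Definition slice (B : set X) (n : nat) : set cantor_space :=
  [set t | B (n, t)].

Definition admissible (R : realType) (B : set X) : Prop :=
  (forall n, clop (slice B n)) /\ cvgn (fun n => lam R (slice B n)).

Definition mu (R : realType) (B : set X) : R :=
  limn (fun n => lam R (slice B n)).

Definition is_algebra (F : set (set X)) : Prop :=
  [/\ F set0, (forall A, F A -> F (~` A)) &
      (forall A B, F A -> F B -> F (A `|` B))].

Definition admissible_alg (R : realType) (F : set (set X)) : Prop :=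
  forall B, F B -> admissible R B.

Definition gen_alg (G : set (set X)) : set (set X) :=
  [set A | forall F, is_algebra F -> G `<=` F -> F A].

Definition A0 : set (set X) :=
  gen_alg [set A `*` C | A in [set A : set nat | finite_set A \/ finite_set (~` A)]
                        & C in clop].

Definition fa_prob (R : realType) (nu : set X -> R) : Prop :=
  [/\ nu setT = 1, (forall A, 0 <= nu A) &
      (forall A B, A `&` B = set0 -> nu (A `|` B) = nu A + nu B)].

Definition finitely_supported (R : realType) (nu : set X -> R) : Prop :=
  exists F : set X, finite_set F /\ nu (~` F) = 0.

From HB Require Import structures.
From mathcomp Require Import all_boot all_order all_algebra.
From mathcomp Require Import all_classical all_reals all_analysis.
From mathcomp Require Import ring lra.
Import Order.TTheory GRing.Theory Num.Theory.
Import numFieldTopology.Exports numFieldNormedType.Exports.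
Local Open Scope classical_set_scope.
Local Open Scope ring_scope.
Set Implicit Arguments. Unset Strict Implicit. Unset Printing Implicit Defensive.

(* Choose k_j >= j with nu_(k_j)(B0 restricted to levels >= j) > mu(B0)/2 and
   let L_n list the finite supports of nu_(k_0), ..., nu_(k_n).  Let A be the
   set of points (n, t) of B0 such that t shares its first |L_n| + n bits with
   the second coordinate of some point of L_n.  The n-th slice of A is clopen
   of measure at most |L_n| 2^-(|L_n|+n) <= 1/(n+1), so mu(A) = 0, and every
   set of the algebra generated by B and A differs from a member of B by a
   subset of A, hence is admissible with the same mu.  But A contains every
   point of B0 at level >= j in the support of nu_(k_j), so
   nu_(k_j)(A) > mu(B0)/2 for all j. *)

Definition cyl (t : cantor_space) (d : nat) : set cantor_space :=
  [set s | forall i, (i < d)%N -> s i = t i].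

Lemma nbhs_cyl t d : nbhs t (cyl t d).
Proof.
elim: d => [|d IH]; first exact: filterS (@filterT _ _ (nbhs_filter t)) => s _ i.
have coord_d : nbhs t (proj d @^-1` [set t d]).
  exact: (@proj_continuous _ _ d t _ (discrete_set1 (t d))).
apply: filterS (filterI IH coord_d) => s [sdt sd] i.
by rewrite ltnS leq_eqVlt => /predU1P[->|]; [exact: sd | exact: sdt].
Qed.

Lemma cantor_cvgP (s : nat -> cantor_space) (t : cantor_space) :
  (forall i, \forall n \near \oo, s n i = t i) -> s @ \oo --> t.
Proof.
move=> st; apply/pointwise_cvgP => i.
by apply/discrete_cvg; apply: filterS (st i).
Qed.

Lemma depends_on_le n m (C : set cantor_space) :
  (n <= m)%N -> depends_on n C -> depends_on m C.
Proof. by move=> nm C_n t s ts; apply: C_n => i /leq_trans/(_ nm)/ts. Qed.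

Lemma depends_on_setC n (C : set cantor_space) :
  depends_on n C -> depends_on n (~` C).
Proof. by move=> C_n t s /C_n ts; rewrite /setC /=; tauto. Qed.

Lemma depends_on_open n (C : set cantor_space) : depends_on n C -> open C.
Proof.
move=> C_n; rewrite openE => t Ct; apply: filterS (nbhs_cyl t n) => s st.
by apply/(C_n t s) => // i /st ->.
Qed.

Lemma depends_on_clopen n (C : set cantor_space) : depends_on n C -> clop C.
Proof.
move=> C_n; split; first exact: depends_on_open C_n.
by rewrite -[C]setCK closedC; apply/depends_on_open/depends_on_setC/C_n.
Qed.

Lemma open_cyl (C : set cantor_space) t :
  open C -> C t -> exists d, cyl t d `<=` C.
Proof.
move=> oC Ct; apply: contrapT => /forallNP noC.
have /choice[s sP] d : exists s, cyl t d s /\ ~ C s.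
  by have /existsNP[s /not_implyP] := noC d; exists s.
have : s @ \oo --> t.
  apply: cantor_cvgP => i; exists i.+1 => // d /= id.
  by apply: (sP d).1; exact: leq_trans id.
move/(_ C (open_nbhs_nbhs (conj oC Ct))) => -[N _ sN].
exact: (sP N).2 (sN N (leqnn N)).
Qed.

Lemma clopen_depends_on (C : set cantor_space) :
  clop C -> exists n, depends_on n C.
Proof.
move=> [oC cC].
have /choice[d dP] p : exists d, cyl p d `<=` C \/ cyl p d `<=` ~` C.
  have [Cp|nCp] := pselect (C p).
    by have [d ?] := open_cyl oC Cp; exists d; left.
  by have [d ?] := open_cyl (closed_openC cC) nCp; exists d; right.
have := cantor_space_compact; rewrite compact_cover.
case/(_ _ [set: cantor_space] (fun p => cyl p (d p))) => [||P _ PC].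
- move=> p _; apply: (@depends_on_open (d p)) => t s ts.
  by split=> pt i id; rewrite -pt // ts.
- by move=> t _; exists t => // i.
exists (\max_(p <- finmap.enum_fset P) d p) => t s ts.
have [p Pp tp] := PC t I.
have dp_le : (d p <= \max_(p <- finmap.enum_fset P) d p)%N by apply: leq_bigmax_seq.
have sp : cyl p (d p) s by move=> i id; rewrite -ts ?(leq_trans id) ?tp.
by case: (dP p) => sub; have := sub _ tp; have := sub _ sp; rewrite /setC /=; tauto.
Qed.

Lemma ext_seq_lt n (f : {ffun 'I_n -> bool}) i (i_n : (i < n)%N) :
  ext_seq f i = f (Ordinal i_n).
Proof. by rewrite /ext_seq insubT. Qed.

Definition ffun_snoc n (p : {ffun 'I_n -> bool} * bool) : {ffun 'I_n.+1 -> bool} :=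
  [ffun i => if unlift ord_max i is Some j then p.1 j else p.2].

Lemma ffun_snoc_bij n : bijective (@ffun_snoc n).
Proof.
exists (fun g : {ffun 'I_n.+1 -> bool} =>
  ([ffun j => g (lift ord_max j)] : {ffun 'I_n -> bool}, g ord_max)).
  move=> [f b]; congr pair; last by rewrite ffunE unlift_none.
  by apply/ffunP => j; rewrite !ffunE liftK.
move=> g; apply/ffunP => i; rewrite ffunE.
by case: unliftP => [j ->|->] /=; rewrite ?ffunE.
Qed.

Lemma lam_atS (R : realType) n (C : set cantor_space) :
  depends_on n C -> lam_at R n.+1 C = lam_at R n C.
Proof.
move=> C_n; rewrite /lam_at.
(* The two one-bit extensions of a prefix of length n lie both in C or both
   outside C, so each term of the sum at depth n is counted twice. *)
rewrite (reindex (@ffun_snoc n)) /=; last exact/onW_bij/ffun_snoc_bij.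
rewrite -(pair_big xpredT xpredT
  (fun f b => (if `[< C (ext_seq (ffun_snoc (f, b))) >] then 1 else 0) : R)) /=.
have snocE (f : {ffun 'I_n -> bool}) b :
    `[< C (ext_seq (ffun_snoc (f, b))) >] = `[< C (ext_seq f) >].
  apply/asbool_equiv_eq/C_n => i i_n; have i_Sn : (i < n.+1)%N := ltnW i_n.
  rewrite (ext_seq_lt _ i_n) (ext_seq_lt _ i_Sn) ffunE.
  have -> : Ordinal i_Sn = lift ord_max (Ordinal i_n).
    by apply: val_inj; rewrite /= /bump leqNgt i_n.
  by rewrite liftK.
under eq_bigr do rewrite big_bool /= !snocE -mulr2n -mulr_natl.
by rewrite -mulr_sumr exprS invfM mulrAC -!mulrA mulVKf ?pnatr_eq0 // mulrC.
Qed.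

Lemma lam_at_depth (R : realType) n m (C : set cantor_space) :
  depends_on n C -> (n <= m)%N -> lam_at R m C = lam_at R n C.
Proof.
move=> C_n; elim: m => [|m IH]; first by rewrite leqn0 => /eqP->.
rewrite leq_eqVlt => /predU1P[<-//|]; rewrite ltnS => nm.
by rewrite lam_atS ?IH //; exact: depends_on_le nm C_n.
Qed.

Lemma lamE (R : realType) n (C : set cantor_space) :
  depends_on n C -> lam R C = lam_at R n C.
Proof.
move=> C_n; rewrite /lam; set m := xget _ _.
have C_m : depends_on m C by apply: (@xgetPex _ 0%N [set n | depends_on n C]); exists n.
by rewrite -(lam_at_depth R C_n (leq_maxl n m)) (lam_at_depth R C_m (leq_maxr n m)).
Qed.

Section lam_at.
Variables (R : realType) (n : nat).

Let indicator_ge0 (b : bool) : 0 <= (if b then 1 else 0 : R).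
Proof. by case: b. Qed.

Lemma lam_at_ge0 (C : set cantor_space) : 0 <= lam_at R n C.
Proof. by rewrite /lam_at divr_ge0 ?exprn_ge0 ?sumr_ge0. Qed.

Lemma lam_at_le_add (P Q Z : set cantor_space) :
  P `<=` Q `|` Z -> lam_at R n P <= lam_at R n Q + lam_at R n Z.
Proof.
move=> PQZ; rewrite /lam_at -mulrDl ler_wpM2r ?invr_ge0 ?exprn_ge0 //.
rewrite -big_split ler_sum // => f _.
case: (asboolP (P (ext_seq f))) => [/PQZ [Qf|Zf]|_]; last exact: addr_ge0.
- by rewrite (asboolT Qf) lerDl.
- by rewrite (asboolT Zf) lerDr.
Qed.

Lemma lam_at0 : lam_at R n set0 = 0.
Proof. by rewrite /lam_at big1 ?mul0r // => f _; rewrite asboolF. Qed.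

End lam_at.

Lemma lam_le_add (R : realType) (P Q Z : set cantor_space) :
  clop P -> clop Q -> clop Z -> P `<=` Q `|` Z -> lam R P <= lam R Q + lam R Z.
Proof.
move=> /clopen_depends_on[n1 P_n] /clopen_depends_on[n2 Q_n]
  /clopen_depends_on[n3 Z_n] PQZ.
pose n := maxn n1 (maxn n2 n3).
have le1 : (n1 <= n)%N := leq_maxl _ _.
have le2 : (n2 <= n)%N by rewrite !leq_max leqnn orbT.
have le3 : (n3 <= n)%N by rewrite !leq_max leqnn !orbT.
rewrite (lamE R (depends_on_le le1 P_n)) (lamE R (depends_on_le le2 Q_n)).
by rewrite (lamE R (depends_on_le le3 Z_n)) lam_at_le_add.
Qed.

Lemma lam0 (R : realType) : lam R set0 = 0.
Proof. by rewrite (@lamE R 0) ?lam_at0. Qed.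

Lemma lam_ge0 (R : realType) (C : set cantor_space) : 0 <= lam R C.
Proof. exact: lam_at_ge0. Qed.

Lemma le_lam (R : realType) (P Q : set cantor_space) :
  clop P -> clop Q -> P `<=` Q -> lam R P <= lam R Q.
Proof.
move=> cP cQ PQ; rewrite -[lam R Q]addr0 -(lam0 R).
by apply: lam_le_add => //; [exact: clopen0 | rewrite setU0].
Qed.

Lemma lam_dist (R : realType) (P Q Z : set cantor_space) :
  clop P -> clop Q -> clop Z -> (P `\` Q) `|` (Q `\` P) `<=` Z ->
  `|lam R P - lam R Q| <= lam R Z.
Proof.
move=> cP cQ cZ PQZ.
have PQ : lam R P <= lam R Q + lam R Z.
  apply: lam_le_add => // t Pt; have [|nQt] := pselect (Q t); first by left.
  by right; apply: PQZ; left.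
have QP : lam R Q <= lam R P + lam R Z.
  apply: lam_le_add => // t Qt; have [|nPt] := pselect (P t); first by left.
  by right; apply: PQZ; right.
by rewrite ler_norml; apply/andP; split; lra.
Qed.

Definition cyl_cover (d : nat) (L : seq X) : set cantor_space :=
  [set t | exists2 q, q \in L & cyl q.2 d t].

Lemma cyl_cover_depends_on d L : depends_on d (cyl_cover d L).
Proof.
by move=> t s ts; split=> -[q qL qt]; exists q => // i id; rewrite -qt // ts.
Qed.

Lemma lam_at_cyl_cover (R : realType) d (L : seq X) :
  lam_at R d (cyl_cover d L) <= (size L)%:R / 2 ^+ d.
Proof.
rewrite /lam_at ler_wpM2r ?invr_ge0 ?exprn_ge0 //.
pose prefix (q : X) : {ffun 'I_d -> bool} := [ffun i => q.2 (val i)].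
apply: (@le_trans _ _ (\sum_f \sum_(q <- L) (f == prefix q)%:R)).
  apply: ler_sum => f _; case: asboolP => [[q qL qf]|_]; last exact: sumr_ge0.
  have -> : f = prefix q.
    apply/ffunP => i; rewrite ffunE -qf ?ltn_ord //.
    by rewrite (ext_seq_lt _ (ltn_ord i)); congr (f _); apply: val_inj.
  by rewrite (big_rem q qL) /= eqxx lerDl sumr_ge0.
rewrite exchange_big /=.
have one q : \sum_f (f == prefix q)%:R = 1 :> R.
  by rewrite (bigD1 (prefix q)) //= eqxx big1 ?addr0 // => f /negbTE ->.
under eq_bigr do rewrite one.
by rewrite -sum1_size natr_sum.
Qed.

Lemma size_div_exp2_le (R : realType) a n :
  (a%:R : R) / 2 ^+ (a + n) <= n.+1%:R^-1.
Proof.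
rewrite ler_pdivrMr ?exprn_gt0 // mulrC ler_pdivlMr ?ltr0n //.
rewrite -natrM -natrX ler_nat expnD leq_mul //.
  exact/ltnW/ltn_expl.
exact: ltn_expl.
Qed.

Section fa_prob.
Variables (R : realType) (nu : set X -> R).
Hypothesis nu_prob : fa_prob nu.

Lemma le_fa_prob (P Q : set X) : P `<=` Q -> nu P <= nu Q.
Proof.
case: nu_prob => _ nu_ge0 nuU PQ.
by rewrite -(setDUK PQ) nuU ?setDIK // lerDl.
Qed.

Lemma fa_probU_le (P Q : set X) : nu (P `|` Q) <= nu P + nu Q.
Proof.
case: nu_prob => _ _ nuU; rewrite -{1}(setDUK (@subsetUl _ P Q)).
by rewrite nuU ?setDIK // lerD2l le_fa_prob // => x [[]].
Qed.

Lemma le_fa_prob_support (s : seq X) (P Q : set X) :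
  nu (~` [set` s]) = 0 -> P `&` [set` s] `<=` Q -> nu P <= nu Q.
Proof.
move=> nu_s PQ; rewrite -[nu Q]addr0 -nu_s.
apply: le_trans (fa_probU_le _ _); apply: le_fa_prob => p Pp.
by have [sp|] := pselect ([set` s] p); [left; apply: PQ | right].
Qed.

End fa_prob.

Lemma is_algebraI (F : set (set X)) P Q :
  is_algebra F -> F P -> F Q -> F (P `&` Q).
Proof. by case=> _ FC FU FP FQ; rewrite -[_ `&` _]setCK setCI; auto. Qed.

Section adjoin_null.
Variables (R : realType) (B : set (set X)) (N : set X).
Hypotheses (B_alg : is_algebra B) (B_adm : admissible_alg R B).
Hypotheses (N_clop : forall n, clop (slice N n))
  (N_null : (fun n => lam R (slice N n)) @ \oo --> 0).

Definition null_close_to_B (S : set X) : Prop :=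
  (forall n, clop (slice S n)) /\
  exists2 b, B b & (S `\` b) `|` (b `\` S) `<=` N.

Lemma null_close_to_B_algebra : is_algebra null_close_to_B.
Proof.
case: B_alg => B0 BC BU; split.
- split=> [n|]; first exact: clopen0.
  by exists set0 => // p [[]|[]].
- move=> S [S_clop [b Bb Sb]]; split=> [n|]; first exact: (clopenC set0 (S_clop n)).
  exists (~` b); first exact: BC.
  move=> p [[nSp nnbp]|[nbp nnSp]]; apply: Sb; [right|left];
    by split=> //; apply: contrapT.
- move=> S1 S2 [S1_clop [b1 Bb1 S1b1]] [S2_clop [b2 Bb2 S2b2]].
  split=> [n|]; first exact: (clopenU (S1_clop n) (S2_clop n)).
  exists (b1 `|` b2); first exact: BU.
  move=> p [[[S1p|S2p] nb]|[[b1p|b2p] nS]].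
  + by apply: S1b1; left; split=> // ?; apply: nb; left.
  + by apply: S2b2; left; split=> // ?; apply: nb; right.
  + by apply: S1b1; right; split=> // ?; apply: nS; left.
  + by apply: S2b2; right; split=> // ?; apply: nS; right.
Qed.

Lemma null_close_to_B_admissible S : null_close_to_B S -> admissible R S.
Proof.
move=> [S_clop [b Bb Sb]]; split=> //; have [b_clop b_cvg] := B_adm Bb.
have dist n : `|lam R (slice S n) - lam R (slice b n)| <= lam R (slice N n).
  by apply: lam_dist => // t /(Sb (n, t)).
have diff0 : (fun n => lam R (slice S n) - lam R (slice b n)) @ \oo --> 0.
  apply: (@squeeze_cvgr _ _ _ _ (fun n => - lam R (slice N n))
    (fun n => lam R (slice N n))); last exact: N_null.
  - by apply: nearW => n; have := dist n; rewrite ler_norml.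
  - by rewrite -oppr0; exact: cvgN.
apply: (cvgP (limn (fun n => lam R (slice b n)) + 0)).
rewrite [X in X @ _](_ : _ = (fun n => lam R (slice b n)) +
  (fun n => lam R (slice S n) - lam R (slice b n))); last first.
  by apply/funext => n /=; rewrite addrC subrK.
exact: cvgD.
Qed.

Lemma admissible_alg_adjoin_null : admissible_alg R (gen_alg (B `|` [set N])).
Proof.
move=> S genS; apply: null_close_to_B_admissible.
apply: genS => [|T [BT|->]]; first exact: null_close_to_B_algebra; split.
- exact: (B_adm BT).1.
- by exists T => // p [[]|[]].
- exact: N_clop.
- exists set0; first by case: B_alg.
  by move=> p [[]|[]].
Qed.

Lemma mu_null : mu R N = 0.
Proof. exact: cvg_lim. Qed.

End adjoin_null.

Definition thin_set (L : nat -> seq X) : set X :=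
  [set p | cyl_cover (size (L p.1) + p.1)%N (L p.1) p.2].

Lemma thin_set_clop L n : clop (slice (thin_set L) n).
Proof. exact: depends_on_clopen (@cyl_cover_depends_on (size (L n) + n)%N (L n)). Qed.

Lemma thin_set_mem (L : nat -> seq X) p : p \in L p.1 -> thin_set L p.
Proof. by move=> pL; exists p. Qed.

Lemma lam_thin_set_cvg0 (R : realType) (L : nat -> seq X) (S : set X) :
  (forall n, clop (slice S n)) -> S `<=` thin_set L ->
  (fun n => lam R (slice S n)) @ \oo --> 0.
Proof.
move=> S_clop SL; apply: (@squeeze_cvgr _ _ _ _ (fun=> 0)
  (fun n => n.+1%:R^-1)); [|exact: cvg_cst|exact: cvg_harmonic].
apply: nearW => n; rewrite lam_ge0 /=.
apply: le_trans (le_lam R (S_clop n) (thin_set_clop L n) (fun t St => SL _ St)) _.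
rewrite (lamE R (@cyl_cover_depends_on (size (L n) + n)%N (L n))).
exact: le_trans (lam_at_cyl_cover _ _ _) (size_div_exp2_le _ _ _).
Qed.

Definition tail_set (j : nat) : set X := [set n | (j <= n)%N] `*` [set: cantor_space].

Lemma A0_tail_set j : A0 (tail_set j).
Proof.
move=> F _ sub; apply: sub; exists [set n | (j <= n)%N].
  right; rewrite (_ : ~` _ = `I_j); first exact: finite_II.
  by apply/seteqP; split => n /=; rewrite ltnNge => /negP.
by exists [set: cantor_space] => //; exact: clopenT.
Qed.

Lemma mu_setI_tail_set (R : realType) (b : set X) j :
  admissible R b -> mu R (b `&` tail_set j) = mu R b.
Proof.
move=> [_ b_cvg]; apply: cvg_lim => //; apply: cvg_trans (near_eq_cvg _) b_cvg.
exists j => // n /= jn; congr (lam R _).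
by apply/seteqP; split=> t; [split=> //; split | case].
Qed.

Lemma not_cvg0_frequently_gt (R : realType) (u : nat -> R) (c : R) :
  0 < c -> (forall N, exists2 k, (N <= k)%N & c < u k) -> ~ u @ \oo --> 0.
Proof.
move=> c_gt0 freq /cvgr_lt/(_ c c_gt0)[N _ uN].
by have [k Nk /ltW] := freq N; rewrite leNgt uN.
Qed.

Lemma nu_tail_frequently_gt (R : realType) (B : set (set X))
    (nu : nat -> set X -> R) (B0 : set X) (c : R) :
  is_algebra B -> admissible_alg R B -> A0 `<=` B ->
  (forall b, B b -> (fun k => nu k b) @ \oo --> mu R b) ->
  B B0 -> c < mu R B0 ->
  forall j, exists2 k, (j <= k)%N & c < nu k (B0 `&` tail_set j).
Proof.
move=> B_alg B_adm A0B nu_cvg BB0 c_lt j.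
have B_tail : B (B0 `&` tail_set j).
  by apply: is_algebraI => //; apply: A0B; exact: A0_tail_set.
have := nu_cvg _ B_tail; rewrite mu_setI_tail_set; last exact: B_adm.
move=> /cvgr_gt/(_ c c_lt)[N _ nuN].
by exists (maxn j N); [exact: leq_maxl | apply: nuN; exact: leq_maxr].
Qed.

Theorem lemma2p6 (R : realType) (B : set (set X)) (nu : nat -> set X -> R)
    (B0 : set X) :
  is_algebra B -> admissible_alg R B -> A0 `<=` B ->
  (forall k, fa_prob (nu k)) ->
  (forall k, finitely_supported (nu k)) ->
  (forall b, B b -> (fun k => nu k b) @ \oo --> mu R b) ->
  B B0 -> 0 < mu R B0 ->
  exists A : set X, A `<=` B0 /\
    admissible_alg R (gen_alg (B `|` [set A])) /\
    ~ ((fun k => nu k A) @ \oo --> mu R A).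
Proof.
move=> B_alg B_adm A0B nu_prob nu_fin nu_cvg BB0 mu_gt0.
have half_lt : mu R B0 / 2 < mu R B0 by lra.
have /choice[kk kkP] j :
    exists k, (j <= k)%N /\ mu R B0 / 2 < nu k (B0 `&` tail_set j).
  by have [k] := nu_tail_frequently_gt B_alg B_adm A0B nu_cvg BB0 half_lt j; exists k.
have /choice[supp suppP] k : exists s : seq X, nu k (~` [set` s]) = 0.
  by have [F [/finite_seqP[s ->] ?]] := nu_fin k; exists s.
pose L n := flatten [seq supp (kk i) | i <- iota 0 n.+1].
pose A := B0 `&` thin_set L.
have A_clop n : clop (slice A n).
  exact: (clopenI ((B_adm _ BB0).1 n) (thin_set_clop L n)).
have A_null := @lam_thin_set_cvg0 R L A A_clop (@subIsetr _ _ _).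
exists A; split; first exact: subIsetl.
split; first exact: admissible_alg_adjoin_null.
rewrite (mu_null A_null); apply: (@not_cvg0_frequently_gt _ _ (mu R B0 / 2)) => [|N].
  by rewrite divr_gt0.
have [kN nuN] := kkP N; exists (kk N) => //; apply: lt_le_trans nuN _.
apply: (le_fa_prob_support (nu_prob _) (suppP _)) => p [[B0p [Np _]] sp].
split=> //; apply: thin_set_mem; apply/flattenP; exists (supp (kk N)) => //.
by apply/mapP; exists N; rewrite // mem_iota ltnS.
Qed.
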